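(* Let $(L,T,U,\bar e)$ be a feasible basis structure of an instance of the budget-constrained minimum cost flow problem, with node potentials $\pi,\mu$, and let $e$ be an entering edge (i.e. $e\in L$ with $d_e<0$, or $e\in U$ with $d_e>0$). Then the tuple $(L',T',U',\bar e')$ resulting from a simplex pivot with entering edge $e$ (and any choice of leaving edge) is again a feasible basis structure; in particular $b(C'(\bar e'))\ne 0$, where $C'(\bar e')$ is the cycle closed by $\bar e'$ with $T'$.
   Context: Problem: directed multigraph $G=(V,E)$, capacities $u_e\in\mathbb{N}_{\ge0}$, costs $c_e\in\mathbb{Z}$, usage fees $b_e\in\mathbb{N}_{\ge0}$, budget $B\in\mathbb{N}_{\ge0}$. A feasible flow is $x\in\mathbb{R}^E$ with flow conservation $\sum_{e\in\delta^-(v)}x_e=\sum_{e\in\delta^+(v)}x_e$ at every node and $0\le x\le u$; $c(x)=\sum_e c_ex_e$, $b(x)=\sum_e b_ex_e$; one minimizes $c(x)$ subject to $b(x)\le B$. Basis structure: tuple $(L,T,U,\bar e)$, $\bar e\in E$, $L,T,U$ a partition of $E\setminus\{\bar e\}$, $T$ a spanning tree of the underlying undirected graph. For $f\notin T$, $C(f)$ is the unique cycle in $T\cup\{f\}$ oriented along $f$, with forward edges $C^+(f)$ and backward edges $C^-(f)$; $b(C(f))=\sum_{C^+(f)}b-\sum_{C^-(f)}b$; $\chi(C)\in\{0,\pm1\}^E$ is $+1$ on $C^+$, $-1$ on $C^-$, $0$ elsewhere. It is required that $b(C(\bar e))\ne0$. The basic solution is the unique $x$ with flow conservation, $x=0$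 on $L$, $x=u$ on $U$, $b(x)=B$; the basis structure is feasible if $0\le x\le u$ (then $x$ is the basic feasible flow). Node potentials: for a fixed root $v_r$, $\pi,\mu:V\to\mathbb{R}$ are the unique functions with $\pi_{v_r}=\mu_{v_r}=0$ and $c^\pi_g:=c_g-\pi_v+\pi_w=0$, $b^\mu_g:=b_g-\mu_v+\mu_w=0$ for all $g=(v,w)\in T$ (reduced costs $c^\pi$, $b^\mu$ are defined this way for all edges). Define $d_g:=c^\pi_g-c^\pi_{\bar e}\, b^\mu_g/b^\mu_{\bar e}$. Simplex pivot: given feasible $(L,T,U,\bar e)$ with basic feasible flow $x$ and entering edge $e$, put $\sigma=1$ if $e\in L$, $\sigma=-1$ if $e\in U$, $\theta=\sigma(\chi(C(e))-\frac{b^\mu_e}{b^\mu_{\bar e}}\chi(C(\bar e)))$; for $f\in E$ let $\delta_f=-x_f/\theta_f$ if $\theta_f<0$, $(u_f-x_f)/\theta_f$ if $\theta_f>0$, $+\infty$ otherwise; $\delta=\min_f\delta_f$, $x'=x+\delta\theta$. A leaving edge is any $e'$ with $\delta_{e'}=\delta$ (so $x'_{e'}\in\{0,u_{e'}\}$). New tuple: if $e'=e$, move $e$ from its set ($L$ or $U$) to the other one; if $e'=\bar e$, set $T'=T$, $\bar e'=e$, remove $e$ from $L$ or $U$, and put $\bar e$ into $L'$ if $x'_{\bar e}=0$, into $U'$ otherwise; else remove $e$ from $L$ or $U$, put $e'$ into $L'$ if $x'_{e'}=0$ and into $U'$ otherwise, and set $T'=T\cup\{e\}\setminus\{e'\}$,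 $\bar e'=\bar e$ if this is a spanning tree, and otherwise $T'=T\cup\{\bar e\}\setminus\{e'\}$, $\bar e'=e$. *)

From HB Require Import structures.
From mathcomp Require Import all_boot all_order all_algebra.
From Stdlib Require Import ClassicalEpsilon.
Set Implicit Arguments. Unset Strict Implicit. Unset Printing Implicit Defensive.
Import Order.TTheory GRing.Theory Num.Theory.
Local Open Scope ring_scope.

Record mcf (V E : finType) := MCF {
  src : E -> V;
  tgt : E -> V;
  cap : E -> nat;
  cost : E -> int;
  fee : E -> nat;
  budget : nat
}.

Section Defs.
Variables (R : realFieldType) (V E : finType) (G : mcf V E).

Definition uadj (T : {set E}) : rel V :=
  fun v w => [exists g in T, ((src G g == v) && (tgt G g == w))
                          || ((src G g == w) && (tgt G g == v))].

Definition spanning_tree (T : {set E}) : bool :=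
  [forall v, forall w, connect (uadj T) v w] && (#|T|.+1 == #|V|).

(* Oriented traversal of an edge: (g, true) forward, (g, false) backward. *)
Definition ostart (p : E * bool) : V := if p.2 then src G p.1 else tgt G p.1.
Definition ostop (p : E * bool) : V := if p.2 then tgt G p.1 else src G p.1.

(* s is the (simple) cycle in T \cup {f}, oriented along f, listed starting
   with f traversed forward. *)
Definition is_fcycle (T : {set E}) (f : E) (s : seq (E * bool)) : Prop :=
  [/\ ohead s = Some (f, true),
      all (fun p => p.1 \in f |: T) s,
      uniq (map fst s),
      uniq (map ostart s) &
      cycle (fun p q => ostop p == ostart q) s].

(* C(f): the unique such cycle (chosen by classical choice). *)
Definition fcycle (T : {set E}) (f : E) : seq (E * bool) :=
  epsilon (inhabits [::]) (is_fcycle T f).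

Definition chi (T : {set E}) (f : E) (g : E) : R :=
  if (g, true) \in fcycle T f then 1
  else if (g, false) \in fcycle T f then -1 else 0.

Definition bcyc (T : {set E}) (f : E) : R :=
  \sum_(g : E) (fee G g)%:R * chi T f g.

Definition conservation (x : E -> R) : Prop :=
  forall v : V, \sum_(g | tgt G g == v) x g = \sum_(g | src G g == v) x g.

Definition is_basic (L U : {set E}) (x : E -> R) : Prop :=
  [/\ conservation x,
      forall g, g \in L -> x g = 0,
      forall g, g \in U -> x g = (cap G g)%:R &
      \sum_(g : E) (fee G g)%:R * x g = (budget G)%:R].

(* the basic solution (unique for a basis structure) *)
Definition basic_sol (L U : {set E}) : E -> R :=
  epsilon (inhabits (fun _ => 0)) (is_basic L U).

Definition is_bs (L T U : {set E}) (eb : E) : Prop :=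
  [/\ [&& [disjoint L & T], [disjoint L & U] & [disjoint T & U]],
      L :|: T :|: U = [set~ eb],
      spanning_tree T &
      bcyc T eb != 0].

Definition feasible_bs (L T U : {set E}) (eb : E) : Prop :=
  is_bs L T U eb /\
  (forall g, 0 <= basic_sol L U g <= (cap G g)%:R).

Definition feasible_bs_t (S : {set E} * {set E} * {set E} * E) : Prop :=
  let: (L, T, U, eb) := S in feasible_bs L T U eb.

Definition reduced (w : E -> R) (p : V -> R) (g : E) : R :=
  w g - p (src G g) + p (tgt G g).

Definition is_potential (w : E -> R) (T : {set E}) (vr : V) (p : V -> R) : Prop :=
  p vr = 0 /\ forall g, g \in T -> reduced w p g = 0.

Definition costR (g : E) : R := (cost G g)%:~R.
Definition feeR (g : E) : R := (fee G g)%:R.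

Definition dval (eb : E) (pi mu : V -> R) (g : E) : R :=
  reduced costR pi g - reduced costR pi eb * reduced feeR mu g / reduced feeR mu eb.

Definition theta (L T : {set E}) (eb : E) (mu : V -> R) (e : E) (g : E) : R :=
  (if e \in L then 1 else -1) *
  (chi T e g - reduced feeR mu e / reduced feeR mu eb * chi T eb g).

(* delta_g, with None standing for +infinity *)
Definition step (x th : E -> R) (g : E) : option R :=
  if th g < 0 then Some (- x g / th g)
  else if th g > 0 then Some (((cap G g)%:R - x g) / th g)
  else None.

Definition is_leaving (x th : E -> R) (e' : E) (d : R) : Prop :=
  step x th e' = Some d /\
  forall g, if step x th g is Some d' then d <= d' else true.

Definition pivot (L T U : {set E}) (eb e e' : E) (x' : E -> R)
  : {set E} * {set E} * {set E} * E :=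
  if e' == e then
    (if e \in L then (L :\ e, T, e |: U, eb) else (e |: L, T, U :\ e, eb))
  else if e' == eb then
    (if x' eb == 0 then (eb |: (L :\ e), T, U :\ e, e)
     else (L :\ e, T, eb |: (U :\ e), e))
  else
    let L' := if x' e' == 0 then e' |: (L :\ e) else L :\ e in
    let U' := if x' e' == 0 then U :\ e else e' |: (U :\ e) in
    let T1 := (e |: T) :\ e' in
    if spanning_tree T1 then (L', T1, U', eb)
    else (L', (eb |: T) :\ e', U', e).

End Defs.

(* A circulation vanishing off a spanning tree T is zero, since the incidence
   rows of the tree edges are linearly independent.  So a circulation vanishing
   off T and a few edges f is the combination of the fundamental cycles chi(C(f))
   weighted by its values at these f.  This makes basic solutions unique, shows
   b^mu_f = b(C(f)), hence that theta is a circulation with b(theta) = 0, and the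
   ratio test then keeps x + delta theta feasible with e' at a bound.  What
   remains is b(C'(eb')) <> 0, and theta_e' <> 0 says exactly that
   chi_e'(C(e)) b(C(eb)) <> b(C(e)) chi_e'(C(eb)).  If e' = eb this gives
   b(C(e)) <> 0.  If e' lies on C(e), then T + e - e' is a tree and
   C'(eb) = alpha C(e) + C(eb) with alpha chi_e'(C(e)) + chi_e'(C(eb)) = 0, so
   b(C'(eb)) = 0 would contradict the inequality.  Otherwise e' lies on C(eb)
   only, T + eb - e' is a tree, and C'(e) = C(e) with b(C(e)) <> 0. *)

From Pilot Require Import Defs.
From mathcomp Require Import all_boot all_order all_algebra.
From Stdlib Require Import ClassicalEpsilon.
From mathcomp Require Import zify ring lra.
Import Order.TTheory GRing.Theory Num.Theory.
Set Implicit Arguments. Unset Strict Implicit. Unset Printing Implicit Defensive.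
Local Open Scope ring_scope.

Section Graph.
Variables (R : realFieldType) (V E : finType) (G : mcf V E).

(** * Fundamental cycles *)

Lemma uadj_sym T : symmetric (uadj G T).
Proof. by move=> v w; apply/eq_existsb => g; rewrite [X in _ && X]orbC. Qed.

Lemma mem_oends q v :
  (v \in [:: ostart G q; ostop G q]) = (v \in [:: src G q.1; tgt G q.1]).
Proof. by case: q => g [] /=; rewrite /ostart /ostop /= !inE // orbC. Qed.

Lemma uadj_oedge (T : {set E}) (q : E * bool) : q.1 \in T -> uadj G T (ostart G q) (ostop G q).
Proof.
move=> qT; apply/existsP; exists q.1; rewrite qT /=.
by case: q qT => g [] _; rewrite /ostart /ostop /= !eqxx ?orbT.
Qed.

Definition olink (p q : E * bool) := ostop G p == ostart G q.

(* The default (f, true) only occurs when u and w are not adjacent in T. *)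
Definition oedge (T : {set E}) (f : E) (u w : V) : E * bool :=
  odflt (f, true) [pick q | [&& q.1 \in T, ostart G q == u & ostop G q == w]].

Lemma oedgeP T f u w : uadj G T u w ->
  [/\ (oedge T f u w).1 \in T, ostart G (oedge T f u w) = u & ostop G (oedge T f u w) = w].
Proof.
move=> /existsP[g /andP[gT uw]]; rewrite /oedge.
case: pickP => [q /and3P[qT /eqP -> /eqP ->] // | none].
by case/orP: uw => /andP[/eqP su /eqP tw];
  [move: (none (g, true)) | move: (none (g, false))];
  rewrite /ostart /ostop /= gT su tw !eqxx.
Qed.

Lemma oedge_path T f x p : path (uadj G T) x p ->
  [/\ map (ostart G) (pairmap (oedge T f) x p) = belast x p,
      map (ostop G) (pairmap (oedge T f) x p) = p &
      all (fun q => q.1 \in T) (pairmap (oedge T f) x p)].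
Proof.
elim: p x => [|y p IH] x //= /andP[xy yp].
by have [-> -> ->] := oedgeP f xy; have [-> -> ->] := IH _ yp.
Qed.

Lemma oedge_olink T f x p q0 : ostop G q0 = x -> path (uadj G T) x p ->
  path olink q0 (pairmap (oedge T f) x p) /\
  ostop G (last q0 (pairmap (oedge T f) x p)) = last x p.
Proof.
elim: p x q0 => [|y p IH] x q0 //= q0x /andP[xy yp].
have [_ start stop] := oedgeP f xy; have [-> ->] := IH _ _ stop yp.
by rewrite /olink q0x start eqxx.
Qed.

Lemma oedge_uniq T f x p : path (uadj G T) x p -> uniq (x :: p) ->
  uniq (map fst (pairmap (oedge T f) x p)).
Proof.
elim: p x => [|y p IH] x //= /andP[xy yp] /andP[xNyp /andP[yNp up]].
rewrite IH ?andbT //=; last by rewrite yNp up.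
apply/mapP => -[q qin qe].
have [_ start stop] := oedgeP f xy.
have [_ stops _] := oedge_path f yp.
have qp : ostop G q \in p by rewrite -stops map_f.
have : ostop G q \in [:: ostart G (oedge T f x y); ostop G (oedge T f x y)].
  by rewrite mem_oends qe -mem_oends !inE eqxx orbT.
by rewrite start stop !inE => /orP[] /eqP qxy;
  [move: xNyp | move: yNp]; rewrite -qxy ?inE qp ?orbT.
Qed.

Lemma fcycle_exists T f : spanning_tree G T -> f \notin T ->
  exists s, is_fcycle G T f s.
Proof.
move=> /andP[/forallP conn _] fT.
have /forallP/(_ (src G f))/connectP[p pT last_p] := conn (tgt G f).
case: (shortenP pT) last_p => p' p'T up' _ last_p.
exists ((f, true) :: pairmap (oedge T f) (tgt G f) p').
have [starts _ inT] := oedge_path f p'T.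
split => //=.
- rewrite !inE eqxx /=; apply: sub_all inT => q qT.
  by rewrite !inE qT orbT.
- rewrite oedge_uniq // andbT; apply/mapP => -[q qin qf].
  by move/allP: inT => /(_ q qin); rewrite -qf (negbTE fT).
- move: up'; rewrite starts lastI -last_p rcons_uniq => /andP[srcN ->].
  by rewrite /ostart /= srcN.
- have [linked last_stop] := @oedge_olink T f (tgt G f) p' (f, true) erefl p'T.
  rewrite rcons_path; apply/andP; split; first exact: linked.
  by rewrite last_stop -last_p /ostart /= eqxx.
Qed.

Lemma fcycleP T f : spanning_tree G T -> f \notin T ->
  is_fcycle G T f (Defs.fcycle G T f).
Proof. by move=> hT fT; apply: epsilon_spec; apply: fcycle_exists. Qed.

Definition osign (p : E * bool) : R := if p.2 then 1 else -1.

Lemma osign_sumE (s : seq (E * bool)) g : uniq (map fst s) ->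
  (if (g, true) \in s then 1 else if (g, false) \in s then -1 else 0)
  = \sum_(p <- s) (p.1 == g)%:R * osign p.
Proof.
elim: s => [|[h b] s IH] /=; first by rewrite big_nil.
move=> /andP[hNs us]; rewrite big_cons /= -IH // !inE.
have [<-|hg] := eqVneq h g; last first.
  have ne c : ((g, c) == (h, b)) = false by apply/negbTE; apply: contraNneq hg => -[->].
  by rewrite !ne mul0r add0r.
have notin c : (h, c) \in s = false.
  by apply/negbTE; apply: contra hNs => hc; apply/mapP; exists (h, c).
by rewrite !notin !orbF /osign; case: b; rewrite ?xpair_eqE !eqxx /= mul1r addr0.
Qed.

Lemma olink_path_ends q t : path olink q t ->
  map (ostop G) (belast q t) = map (ostart G) t.
Proof. by elim: t q => [|r t IH] q //= /andP[/eqP -> /IH ->]. Qed.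

Lemma olink_cycle_perm s : cycle olink s -> perm_eq (map (ostop G) s) (map (ostart G) s).
Proof.
case: s => [|q s] // cyc.
have := @olink_path_ends q (rcons s q) cyc; rewrite belast_rcons => ->.
by rewrite map_rcons perm_rcons.
Qed.

Section FundamentalCycle.
Variables (T : {set E}) (f : E).
Hypotheses (hT : spanning_tree G T) (fT : f \notin T).
Local Notation C := (Defs.fcycle G T f).

Lemma chiE g : chi R G T f g = \sum_(p <- C) (p.1 == g)%:R * osign p.
Proof. by have [_ _ uC _ _] := fcycleP hT fT; rewrite /chi osign_sumE. Qed.

Lemma chi_self : chi R G T f f = 1.
Proof.
have [headC _ _ _ _] := fcycleP hT fT; rewrite /chi.
by case: C headC => // q s [->]; rewrite inE eqxx.
Qed.

Lemma chi_out g : g \notin f |: T -> chi R G T f g = 0.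
Proof.
have [_ CfT _ _ _] := fcycleP hT fT => gN.
have notin b : (g, b) \in C = false.
  by apply/negbTE; apply: contra gN => /(allP CfT).
by rewrite /chi !notin.
Qed.

Lemma chi_conservation : conservation G (chi R G T f).
Proof.
have [_ _ _ _ cC] := fcycleP hT fT.
have endsE (sel : E -> V) v : \sum_(g | sel g == v) chi R G T f g
    = \sum_(p <- C) (sel p.1 == v)%:R * osign p.
  under eq_bigr do rewrite chiE.
  rewrite exchange_big /=; apply: eq_bigr => p _.
  rewrite big_mkcond (bigD1 p.1) //= eqxx mul1r big1 ?addr0.
    by case: (sel p.1 == v); rewrite ?mul1r ?mul0r.
  by move=> g /negbTE; rewrite eq_sym => ->; rewrite mul0r; case: ifP.
move=> v; rewrite !endsE; apply/eqP; rewrite -subr_eq0 -sumrB.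
rewrite (eq_bigr (fun p => (ostop G p == v)%:R - (ostart G p == v)%:R)); last first.
  by move=> [g []] _; rewrite /osign /ostop /ostart /= ?mulr1 ?mulrN1 1?addrC ?opprK.
rewrite sumrB -(big_map (ostop G) xpredT (fun w => (w == v)%:R)).
by rewrite (perm_big _ (olink_cycle_perm cC)) big_map subrr.
Qed.

End FundamentalCycle.

(** * Circulations and spanning trees *)

Lemma conservationD (a b : E -> R) : conservation G a -> conservation G b ->
  conservation G (fun g => a g + b g).
Proof. by move=> ha hb v; rewrite !big_split /= ha hb. Qed.

Lemma conservationN (a : E -> R) : conservation G a -> conservation G (fun g => - a g).
Proof. by move=> ha v; rewrite !sumrN ha. Qed.

Lemma conservationZ (c : R) (a : E -> R) : conservation G a ->
  conservation G (fun g => c * a g).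
Proof. by move=> ha v; rewrite -!mulr_sumr ha. Qed.

Lemma conservation_sum (I : eqType) (r : seq I) (P : pred I) (F : I -> E -> R) :
  (forall i, i \in r -> P i -> conservation G (F i)) ->
  conservation G (fun g => \sum_(i <- r | P i) F i g).
Proof.
move=> hF v; rewrite exchange_big [RHS]exchange_big /= big_seq_cond [RHS]big_seq_cond.
by apply: eq_bigr => i /andP[ir Pi]; apply: hF.
Qed.

Lemma conservation_potential (x : E -> R) (p : V -> R) : conservation G x ->
  \sum_g (p (tgt G g) - p (src G g)) * x g = 0.
Proof.
have weigh (sel : E -> V) : \sum_g p (sel g) * x g = \sum_v p v * \sum_(g | sel g == v) x g.
  rewrite (partition_big sel xpredT) //=; apply: eq_bigr => v _; rewrite mulr_sumr.
  by apply: eq_big => [g|g /eqP ->].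
move=> hx; under eq_bigr do rewrite mulrBl.
by rewrite sumrB !weigh; under eq_bigr do rewrite hx; rewrite subrr.
Qed.

Definition incidence (g : E) (v : V) : R := (tgt G g == v)%:R - (src G g == v)%:R.

Definition vertex_row (v : V) : 'rV[R]_#|V| := delta_mx 0 (enum_rank v).

Section TreeIncidence.
Variable T : {set E}.
Hypothesis hT : spanning_tree G T.

Definition incidence_mx : 'M[R]_(#|T|, #|V|) :=
  \matrix_(i, j) incidence (enum_val i) (enum_val j).

Lemma row_incidence_mx i :
  row i incidence_mx = vertex_row (tgt G (enum_val i)) - vertex_row (src G (enum_val i)).
Proof.
have enum_valE (j : 'I_#|V|) w : (w == enum_val j) = (j == enum_rank w).
  by rewrite eq_sym; apply/eqP/eqP => [<-|->]; [rewrite enum_valK | rewrite enum_rankK].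
by apply/rowP => j; rewrite !mxE /incidence !enum_valE.
Qed.

Lemma uadj_incidence_sub u w : uadj G T u w ->
  (vertex_row w - vertex_row u <= incidence_mx)%MS.
Proof.
move=> /existsP[g /andP[gT uw]].
have := row_incidence_mx (enum_rank_in gT g); rewrite enum_rankK_in // => rowE.
case/orP: uw => /andP[/eqP <- /eqP <-]; first by rewrite -rowE row_sub.
by rewrite -opprB eqmx_opp -rowE row_sub.
Qed.

Lemma connect_incidence_sub u w : connect (uadj G T) u w ->
  (vertex_row w - vertex_row u <= incidence_mx)%MS.
Proof.
move=> /connectP[p + ->]; elim: p u => [|y p IH] u /=; first by rewrite subrr sub0mx.
move=> /andP[uy /IH yp]; rewrite -[_ - _](subrKA (vertex_row y)).
exact: addmx_sub yp (uadj_incidence_sub uy).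
Qed.

(* By connectivity the rows span all differences of unit rows, a space of
   dimension |V| - 1 = |T|. *)
Lemma incidence_mx_free : row_free incidence_mx.
Proof.
move: hT => /andP[/forallP conn /eqP cardT].
have [v0 _|V0] := pickP (@predT V); last by rewrite (eq_card0 V0) in cardT.
pose D : 'M[R]_#|V| := \matrix_(j, k) (vertex_row (enum_val j) - vertex_row v0) 0 k.
have DM : (D <= incidence_mx)%MS.
  apply/row_subP => j.
  rewrite (_ : row j D = vertex_row (enum_val j) - vertex_row v0); last first.
    by apply/rowP => k; rewrite !mxE.
  exact/connect_incidence_sub/(forallP (conn v0) (enum_val j)).
pose C : 'M[R]_(#|V|, 1) := const_mx 1.
have D1 : (1%:M : 'M[R]_#|V|) = D + C *m vertex_row v0.
  apply/matrixP => j k; rewrite !mxE big_ord1 !mxE mul1r.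
  by rewrite !eqxx /= enum_valK (eq_sym k) addrNK.
have rkC : (\rank (C *m vertex_row v0) <= 1)%N.
  exact: leq_trans (mxrankM_maxr _ _) (rank_leq_row _).
have := mxrank_add D (C *m vertex_row v0); rewrite -D1 mxrank1 => rkD.
rewrite /row_free eqn_leq rank_leq_row -ltnS cardT /=.
by apply: leq_trans rkD _; rewrite -(addn1 (\rank incidence_mx)) leq_add ?mxrankS.
Qed.

Lemma tree_conservation0 (z : E -> R) : conservation G z ->
  (forall g, g \notin T -> z g = 0) -> forall g, z g = 0.
Proof.
move=> hz zT.
pose u : 'rV[R]_#|T| := \row_i z (enum_val i).
have select (P : pred E) : \sum_g z g * (P g)%:R = \sum_(g | P g) z g.
  by rewrite [RHS]big_mkcond; apply: eq_bigr => g _; case: (P g); rewrite ?mulr1 ?mulr0.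
have : u *m incidence_mx = 0.
  apply/rowP => j; rewrite !mxE; under eq_bigr do rewrite !mxE.
  rewrite -(big_enum_val (fun g => z g * incidence g (enum_val j))) /= big_mkcond.
  rewrite (eq_bigr (fun g => z g * incidence g (enum_val j))) => [|g _]; last first.
    by case: ifP => // /negbT /zT ->; rewrite mul0r.
  by under eq_bigr do rewrite mulrBr; rewrite sumrB !select hz subrr.
rewrite -(mul0mx _ incidence_mx) => /(row_free_inj incidence_mx_free)/rowP u0 g.
have [gT|] := boolP (g \in T); last exact: zT.
by have := u0 (enum_rank_in gT g); rewrite !mxE enum_rankK_in.
Qed.

Lemma tree_conservationE (s : seq E) (z : E -> R) : uniq s -> {in s, forall a, a \notin T} ->
  conservation G z -> (forall g, g \notin T -> g \notin s -> z g = 0) ->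
  forall g, z g = \sum_(a <- s) z a * chi R G T a g.
Proof.
move=> us sNT hz zs g; apply/eqP; rewrite -subr_eq0; apply/eqP; move: g.
apply: tree_conservation0.
  apply: conservationD => //; apply: conservationN; apply: conservation_sum => a aS _.
  exact/conservationZ/chi_conservation/sNT.
move=> g gT; apply/eqP; rewrite subr_eq0; apply/eqP.
have chi_off a : a \in s -> a != g -> chi R G T a g = 0.
  by move=> aS ag; rewrite chi_out ?sNT // !inE negb_or eq_sym ag gT.
have [gS|gNs] := boolP (g \in s); last first.
  rewrite zs // big_seq big1 // => a aS; rewrite chi_off ?mulr0 //.
  by apply: contraNneq gNs => <-.
rewrite (big_rem g) //= chi_self ?sNT // mulr1 big_seq big1 ?addr0 // => a aR.
rewrite chi_off ?mulr0 //; first exact: mem_rem aR.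
by apply: contraTneq aR => ->; rewrite mem_rem_uniqF.
Qed.

Lemma reduced_fcycle (w : E -> R) (p : V -> R) f : f \notin T ->
  (forall g, g \in T -> reduced G w p g = 0) ->
  reduced G w p f = \sum_g w g * chi R G T f g.
Proof.
move=> fT wpT.
have pot0 := conservation_potential p (chi_conservation hT fT).
rewrite -[RHS]addr0 -[X in _ + X]pot0 -big_split /=.
rewrite (bigD1 f) //= chi_self // big1 => [|g gf]; first by rewrite /reduced; ring.
rewrite -mulrDl; have [gT|gNT] := boolP (g \in T).
  have -> : w g + (p (tgt G g) - p (src G g)) = reduced G w p g by rewrite /reduced; ring.
  by rewrite wpT // mul0r.
by rewrite chi_out ?mulr0 // !inE negb_or gf.
Qed.

End TreeIncidence.

Lemma olink_connect (T : {set E}) q t : path olink q t -> all (fun p => p.1 \in T) t ->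
  connect (uadj G T) (ostop G q) (ostop G (last q t)).
Proof.
elim: t q => [|r t IH] q /=; first by rewrite connect0.
move=> /andP[/eqP qr rt] /andP[rT tT]; apply: connect_trans (IH _ rt tT).
by rewrite qr; apply/connect1/uadj_oedge.
Qed.

(* The rest of C(a) joins the ends of g. *)
Lemma fcycle_connect T a g b : spanning_tree G T -> a \notin T ->
  (g, b) \in Defs.fcycle G T a -> connect (uadj G ((a |: T) :\ g)) (src G g) (tgt G g).
Proof.
move=> hT aT gC; have [_ CaT uC _ cC] := fcycleP hT aT.
case: (rot_to gC) => i s rotC.
have uS : uniq (map fst ((g, b) :: s)) by rewrite -rotC map_rot rot_uniq.
have : cycle olink ((g, b) :: s) by rewrite -rotC rot_cycle.
rewrite /= rcons_path => /andP[gs /eqP last_s].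
have sT : all (fun p => p.1 \in (a |: T) :\ g) s.
  apply/allP => p ps; rewrite !inE.
  have pC : p \in Defs.fcycle G T a by rewrite -(mem_rot i) rotC inE ps orbT.
  move: uS => /= /andP[gNs _].
  have -> /= : p.1 != g by apply: contraNneq gNs => <-; apply: map_f.
  by rewrite -in_setU1; apply: (allP CaT).
have := olink_connect gs sT; rewrite last_s.
have csym := sym_connect_sym (@uadj_sym ((a |: T) :\ g)).
by case: b {gC rotC uS gs last_s} => //=; rewrite csym.
Qed.

Lemma spanning_tree_exchange T a g : spanning_tree G T -> a \notin T -> g \in T ->
  chi R G T a g != 0 -> spanning_tree G ((a |: T) :\ g).
Proof.
move=> hT aT gT chi_g; set T' := (a |: T) :\ g.
have [b gC] : exists b, (g, b) \in Defs.fcycle G T a.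
  move: chi_g; rewrite /chi; case: ifP => [gC _|_]; first by exists true.
  by case: ifP => [gC _|_]; [exists false | rewrite eqxx].
have ends := fcycle_connect hT aT gC.
have TT' : subrel (uadj G T) (connect (uadj G T')).
  move=> u w /existsP[h /andP[hT' uw]]; have [hg|hg] := eqVneq h g.
    rewrite hg in uw; case/orP: uw => /andP[/eqP <- /eqP <-] //.
    by rewrite (sym_connect_sym (@uadj_sym T')).
  by apply/connect1/existsP; exists h; rewrite !inE hg hT' orbT.
move: hT => /andP[/forallP conn /eqP cardT]; apply/andP; split.
  apply/forallP => u; apply/forallP => w.
  exact/(connect_sub TT')/(forallP (conn u)).
have := cardsD1 g (a |: T); rewrite cardsU1 aT !inE gT orbT !add1n => -[cardT'].
by rewrite -cardT /T' -cardT'.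
Qed.

Section Exchange.
Variables (T : {set E}) (a c g : E).
Hypotheses (hT : spanning_tree G T) (aT : a \notin T) (cT : c \notin T) (ac : a != c)
  (gT : g \in T) (hT' : spanning_tree G ((a |: T) :\ g)).
Local Notation T' := ((a |: T) :\ g).

Let cT' : c \notin T'. Proof. by rewrite !inE (eq_sym c a) (negbTE ac) (negbTE cT) andbF. Qed.

Lemma chi_exchange h : chi R G T' c h = chi R G T' c a * chi R G T a h + chi R G T c h.
Proof.
rewrite (@tree_conservationE T hT [:: a; c]) /=.
- by rewrite !big_cons big_nil addr0 chi_self // mul1r.
- by rewrite inE ac.
- by move=> f; rewrite !inE => /orP[]/eqP->.
- exact: chi_conservation.
move=> f fT; rewrite !inE negb_or => /andP[fa fc]; rewrite chi_out //.
by rewrite !inE negb_or fc negb_and negb_or fa fT orbT.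
Qed.

Lemma chi_exchange_removed :
  chi R G T' c a * chi R G T a g + chi R G T c g = 0.
Proof. by rewrite -chi_exchange chi_out // !inE eqxx /= orbF; apply: contraNneq cT => <-. Qed.

Lemma bcyc_exchange :
  bcyc R G T' c = chi R G T' c a * bcyc R G T a + bcyc R G T c.
Proof.
rewrite /bcyc mulr_sumr -big_split /=; apply: eq_bigr => h _.
by rewrite chi_exchange mulrDr mulrCA.
Qed.

End Exchange.

(** * Basis structures and basic solutions *)

Lemma in_setD1U1_count (T : finType) (A B : {set T}) a g : a \in A -> a \notin B ->
  ((g \in A :\ a) + (g \in a |: B) = (g \in A) + (g \in B))%N.
Proof.
by move=> aA aB; rewrite !inE; case: eqVneq => [->|] /=; rewrite ?aA ?(negbTE aB) ?addn0.
Qed.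

Lemma in_setU1D1_count (T : finType) (A : {set T}) a b g : a \notin A -> b \in a |: A ->
  ((g \in (a |: A) :\ b) + (g == b) = (g == a) + (g \in A))%N.
Proof.
move=> aA; rewrite !inE; have [-> | gb] := eqVneq g b => /=.
  by have [-> | _] := eqVneq b a => /= [|->]; rewrite ?(negbTE aA).
by rewrite addn0; have [->|] := eqVneq g a; rewrite ?(negbTE aA).
Qed.

Lemma exchange_count (T : finType) (A : {set T}) a b c g : a \notin A -> b \in A ->
  ((g \in (a |: A) :\ b) + (g == c) + (g == b) = (g \in A) + (g == c) + (g == a))%N.
Proof. by move=> aA bA; have := in_setU1D1_count g aA (setU1r a bA); lia. Qed.

Definition partitions (L T U : {set E}) (eb : E) :=
  forall g, ((g \in L) + (g \in T) + (g \in U) + (g == eb))%N = 1%N.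

Lemma is_bsP L T U eb : is_bs R G L T U eb <->
  [/\ partitions L T U eb, spanning_tree G T & bcyc R G T eb != 0].
Proof.
split=> [[/and3P[dLT dLU dTU] cover hT hb] | [part hT hb]]; split=> //.
- move=> g; have /setP/(_ g) := cover; rewrite !inE.
  have disj (A B : {set E}) : [disjoint A & B] -> ~~ ((g \in A) && (g \in B)).
    by move/disjoint_setI0/setP/(_ g); rewrite !inE => ->.
  move: (disj _ _ dLT) (disj _ _ dLU) (disj _ _ dTU).
  by case: (g \in L); case: (g \in T); case: (g \in U); case: (g == eb).
- apply/and3P; split; rewrite -setI_eq0; apply/eqP/setP => g; rewrite !inE;
  by move: (part g); case: (g \in L); case: (g \in T); case: (g \in U); case: (g == eb).
- apply/setP => g; rewrite !inE; move: (part g).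
  by case: (g \in L); case: (g \in T); case: (g \in U); case: (g == eb).
Qed.

Variant partitions_spec (L T U : {set E}) (eb g : E) : bool -> bool -> bool -> bool -> Set :=
  | PartL : partitions_spec L T U eb g true false false false
  | PartT : partitions_spec L T U eb g false true false false
  | PartU : partitions_spec L T U eb g false false true false
  | PartBar : partitions_spec L T U eb g false false false true.

Lemma partitionsP L T U eb g : partitions L T U eb ->
  partitions_spec L T U eb g (g \in L) (g \in T) (g \in U) (g == eb).
Proof.
move/(_ g); case: (g \in L); case: (g \in T); case: (g \in U); case: (g == eb) => // _;
  constructor.
Qed.

Section BasicSolution.
Variables (L T U : {set E}) (eb : E).
Hypothesis hbs : is_bs R G L T U eb.

Let part : partitions L T U eb. Proof. by case/is_bsP: hbs. Qed.
Let hT : spanning_tree G T. Proof. by case/is_bsP: hbs. Qed.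
Let ebT : eb \notin T. Proof. by case: (partitionsP eb part) (eqxx eb). Qed.

(* Send the capacity of every edge of U around its fundamental cycle, then
   correct along C(eb) to meet the budget. *)
Lemma basic_sol_exists : exists x : E -> R, is_basic G L U x.
Proof.
have UT g : g \in U -> g \notin T by case: (partitionsP g part).
pose t := ((budget G)%:R - \sum_(g in U) (cap G g)%:R * bcyc R G T g) / bcyc R G T eb.
exists (fun h => \sum_(g in U) (cap G g)%:R * chi R G T g h + t * chi R G T eb h).
have chi_off f h : f \notin T -> h \notin T -> h != f -> chi R G T f h = 0.
  by move=> fT hT' hf; rewrite chi_out // !inE negb_or hf.
split.
- apply: conservationD; last exact/conservationZ/chi_conservation.
  by apply: conservation_sum => g _ gU; apply/conservationZ/chi_conservation/UT.
- move=> h hL; have /and3P[hT' hU hNeb] : [&& h \notin T, h \notin U & h != eb].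
    by move: hL; case: (partitionsP h part).
  rewrite big1 ?add0r => [|g gU]; first by rewrite chi_off ?mulr0.
  by rewrite chi_off ?mulr0 ?(UT g) //; apply: contraNneq hU => ->.
- move=> h hU; have /andP[hT' hNeb] : (h \notin T) && (h != eb).
    by move: hU; case: (partitionsP h part).
  rewrite (bigD1 h) //= chi_self // mulr1 big1 ?addr0 => [|g /andP[gU gh]].
    by rewrite chi_off ?mulr0 ?addr0.
  by rewrite chi_off ?mulr0 ?(UT g) // eq_sym.
- under eq_bigr do rewrite mulrDr mulr_sumr.
  rewrite big_split /= exchange_big /=.
  rewrite (eq_bigr (fun g => (cap G g)%:R * bcyc R G T g)) => [|g _]; last first.
    by rewrite /bcyc mulr_sumr; apply: eq_bigr => h _; rewrite mulrCA.
  have -> : \sum_h (fee G h)%:R * (t * chi R G T eb h) = t * bcyc R G T eb.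
    by rewrite /bcyc mulr_sumr; apply: eq_bigr => h _; rewrite mulrCA.
  by rewrite divfK; [rewrite addrC subrK | case/is_bsP: hbs].
Qed.

Lemma basic_solP : is_basic G L U (basic_sol R G L U).
Proof. by apply: epsilon_spec; apply: basic_sol_exists. Qed.

Lemma basic_sol_unique (y : E -> R) : is_basic G L U y -> basic_sol R G L U =1 y.
Proof.
case: basic_solP => cx Lx Ux bx [cy Ly Uy by'].
pose z g := basic_sol R G L U g - y g.
have zE : forall g, z g = \sum_(a <- [:: eb]) z a * chi R G T a g.
  apply: tree_conservationE => //; first by move=> a; rewrite inE => /eqP->.
    exact: conservationD cx (conservationN cy).
  move=> g gT; rewrite inE => geb.
  have /orP[gL|gU] : (g \in L) || (g \in U) by move: gT geb; case: (partitionsP g part).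
    by rewrite /z Lx // Ly // subrr.
  by rewrite /z Ux // Uy // subrr.
have zeb : z eb = 0.
  have : \sum_g (fee G g)%:R * z g = 0.
    by under eq_bigr do rewrite mulrBr; rewrite sumrB bx by' subrr.
  under eq_bigr do rewrite zE big_seq1 mulrCA.
  rewrite -mulr_sumr => /eqP; rewrite mulf_eq0 => /orP[/eqP //|].
  by case/is_bsP: hbs => _ _ /negbTE ->.
by move=> g; apply/eqP; rewrite -subr_eq0 -/(z g) zE big_seq1 zeb mul0r.
Qed.

End BasicSolution.

Lemma feasible_of_basic L T U eb (y : E -> R) : is_bs R G L T U eb -> is_basic G L U y ->
  (forall g, 0 <= y g <= (cap G g)%:R) -> feasible_bs R G L T U eb.
Proof. by move=> hbs hy yb; split=> // g; rewrite (basic_sol_unique hbs hy). Qed.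

(** * The pivot *)

Section RatioTest.
Variables (x th : E -> R) (e' : E) (d : R).
Hypotheses (hx : forall g, 0 <= x g <= (cap G g)%:R) (hleave : is_leaving G x th e' d).

Lemma leaving_theta_neq0 : th e' != 0.
Proof.
by case: hleave; rewrite /step; case: ltrP => [/ltr0_neq0 //|]; case: ltrP => // /lt0r_neq0.
Qed.

Lemma leaving_step : d * th e' = (if th e' < 0 then - x e' else (cap G e')%:R - x e').
Proof.
case: hleave; rewrite /step; case: ltrP => [th0 [<-] _|]; first by rewrite divfK ?ltr0_neq0.
by case: ltrP => // th0 _ [<-] _; rewrite divfK ?gt_eqF.
Qed.

Lemma leaving_ge0 : 0 <= d.
Proof.
have := leaving_step; have /andP[x0 xc] := hx e'.
by case: ltrgtP leaving_theta_neq0 => // th0 _ dth; nra.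
Qed.

Lemma leaving_bounds g : 0 <= x g + d * th g <= (cap G g)%:R.
Proof.
have /andP[x0 xc] := hx g; have d0 := leaving_ge0.
case: hleave => _ /(_ g); rewrite /step.
case: ltrP => [th0 le_d|th0]; first have := ler_wnM2r (ltW th0) le_d.
  by rewrite divfK ?ltr0_neq0 // => dth; apply/andP; split; nra.
case: ltrP => [th0' le_d|th0' _]; first have := ler_wpM2r (ltW th0') le_d.
  by rewrite divfK ?gt_eqF // => dth; apply/andP; split; nra.
have -> : th g = 0 by apply/eqP; rewrite eq_le th0 th0'.
by rewrite mulr0 addr0 x0 xc.
Qed.

Lemma leaving_at_bound : th e' < 0 -> x e' + d * th e' = 0.
Proof. by move=> th0; rewrite leaving_step th0 subrr. Qed.

Lemma leaving_at_cap : 0 < th e' -> x e' + d * th e' = (cap G e')%:R.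
Proof. by move=> th0; rewrite leaving_step ltNge (ltW th0) /= addrC subrK. Qed.

End RatioTest.

(* The balances say that e leaves L :|: U while e' enters it, and that e' leaves
   T :|: [set eb] while e enters it. *)
Lemma partitions_pivot (L T U A T' B : {set E}) (eb e e' eb' : E) : partitions L T U eb ->
  (forall g, (g \in A) + (g \in B) + (g == e) = (g \in L) + (g \in U) + (g == e'))%N ->
  (forall g, (g \in T') + (g == eb') + (g == e') = (g \in T) + (g == eb) + (g == e))%N ->
  partitions A T' B eb'.
Proof. by move=> part hLU hT' g; have := part g; have := hLU g; have := hT' g; lia. Qed.

Section Pivot.
Variables (L T U : {set E}) (eb : E) (mu : V -> R) (e e' : E) (d : R).
Let x := basic_sol R G L U.
Let th := theta G L T eb mu e.
Let x' g := x g + d * th g.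
Hypotheses (hbs : is_bs R G L T U eb) (hx : forall g, 0 <= x g <= (cap G g)%:R)
  (hmu : forall g, g \in T -> reduced G (feeR R G) mu g = 0)
  (eLU : (e \in L) || (e \in U)) (hleave : is_leaving G x th e' d).

Let part : partitions L T U eb. Proof. by case/is_bsP: hbs. Qed.
Let hT : spanning_tree G T. Proof. by case/is_bsP: hbs. Qed.
Let hbb : bcyc R G T eb != 0. Proof. by case/is_bsP: hbs. Qed.
Let ebT : eb \notin T. Proof. by case: (partitionsP eb part) (eqxx eb). Qed.
Let eT : e \notin T. Proof. by move: eLU; case: (partitionsP e part). Qed.
Let e_neq_eb : e != eb. Proof. by move: eLU; case: (partitionsP e part). Qed.

Local Notation be := (bcyc R G T e).
Local Notation bb := (bcyc R G T eb).
Local Notation sg := (if e \in L then 1 else -1 : R).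

Lemma thetaE g : th g = sg * (chi R G T e g - be / bb * chi R G T eb g).
Proof. by rewrite /th /theta (reduced_fcycle hT eT hmu) (reduced_fcycle hT ebT hmu). Qed.

Lemma theta_conservation : conservation G th.
Proof.
move=> v; rewrite !(eq_bigr _ (fun g _ => thetaE g)); move: v.
apply/conservationZ/conservationD; first exact: chi_conservation.
exact/conservationN/conservationZ/chi_conservation.
Qed.

Lemma theta_fee : \sum_g (fee G g)%:R * th g = 0.
Proof.
rewrite (eq_bigr (fun g => sg * ((fee G g)%:R * chi R G T e g)
    - sg * (be / bb) * ((fee G g)%:R * chi R G T eb g))) => [|g _]; last first.
  by rewrite thetaE; ring.
by rewrite sumrB -!mulr_sumr -/(bcyc R G T e) -/(bcyc R G T eb) -mulrA divfK // subrr.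
Qed.

Lemma theta_off g : g \notin T -> g != e -> g != eb -> th g = 0.
Proof.
move=> gT ge geb; rewrite thetaE !chi_out ?mulr0 ?subr0 ?mulr0 //.
  by rewrite !inE negb_or geb gT.
by rewrite !inE negb_or ge gT.
Qed.

Lemma leaving_edge_cases : [\/ e' = e, e' = eb | e' \in T].
Proof.
have := leaving_theta_neq0 hleave; have [->|e'e] := eqVneq e' e; first by constructor.
have [->|e'eb] := eqVneq e' eb; first by constructor.
by case: (boolP (e' \in T)) => [|e'T]; [constructor | rewrite theta_off ?eqxx].
Qed.

Lemma theta_leaving : chi R G T e e' * bb != be * chi R G T eb e'.
Proof.
have := leaving_theta_neq0 hleave; rewrite thetaE mulf_eq0 negb_or => /andP[_].
apply: contra => /eqP h; apply/eqP; apply: (mulIf hbb).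
by rewrite mul0r mulrBl h mulrAC divfK // subrr.
Qed.

Lemma pivot_is_basic (A B : {set E}) :
  A \subset e' |: (L :\ e) -> B \subset e' |: (U :\ e) ->
  (e' \in A -> x' e' = 0) -> (e' \in B -> x' e' = (cap G e')%:R) -> is_basic G A B x'.
Proof.
have [cx Lx Ux bx] := basic_solP hbs.
have x'E g : g \in L :|: U -> g != e -> x' g = x g.
  move=> gLU ge; rewrite /x' theta_off ?mulr0 ?addr0 //;
    by move: gLU; rewrite inE; case: (partitionsP g part).
move=> /subsetP AL /subsetP BU Ae' Be'; split.
- exact: conservationD cx (conservationZ d theta_conservation).
- move=> g gA; have [ge'|ge'] := eqVneq g e'; first by rewrite ge' Ae' // -ge'.
  move: (AL g gA); rewrite !inE (negbTE ge') => /andP[ge gL].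
  by rewrite x'E ?inE ?gL //; apply: Lx.
- move=> g gB; have [ge'|ge'] := eqVneq g e'; first by rewrite ge' Be' // -ge'.
  move: (BU g gB); rewrite !inE (negbTE ge') => /andP[ge gU].
  by rewrite x'E ?inE ?gU ?orbT //; apply: Ux.
- under eq_bigr do rewrite /x' mulrDr mulrCA.
  by rewrite big_split /= bx -mulr_sumr theta_fee mulr0 addr0.
Qed.

Lemma pivot_feasible_of_basic (A T' B : {set E}) eb' : is_bs R G A T' B eb' -> is_basic G A B x' ->
  feasible_bs R G A T' B eb'.
Proof. by move=> hbs' hx'; apply: feasible_of_basic hbs' hx' (leaving_bounds hx hleave). Qed.

Lemma pivot_feasible_self : e' = e -> feasible_bs_t R G (pivot G L T U eb e e' x').
Proof.
move=> e'e; rewrite /pivot e'e eqxx.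
have the : th e = sg.
  by rewrite thetaE chi_self // chi_out ?mulr0 ?subr0 ?mulr1 // !inE negb_or e_neq_eb eT.
have eU : (e \in U) = ~~ (e \in L) by move: eLU; case: (partitionsP e part).
have [eL|eL] := boolP (e \in L); rewrite eL /= in eU; apply: pivot_feasible_of_basic.
- apply/is_bsP; split=> //; apply: (partitions_pivot (e := e) (e' := e) part) => g //.
  by rewrite in_setD1U1_count ?eU.
- apply: pivot_is_basic; rewrite e'e ?subsetUr ?setUS ?subsetD1 ?subxx ?eU ?inE ?eqxx // => _.
  by rewrite -e'e; apply: (leaving_at_cap hleave); rewrite e'e the eL ltr01.
- apply/is_bsP; split=> //; apply: (partitions_pivot (e := e) (e' := e) part) => g //.
  by rewrite (addnC (g \in e |: L)) in_setD1U1_count ?eU // (addnC (g \in U)).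
- apply: pivot_is_basic; rewrite e'e ?subsetUr ?setUS ?subsetD1 ?subxx ?eU ?inE ?eqxx // => _.
  by rewrite -e'e; apply: (leaving_at_bound hleave); rewrite e'e the (negbTE eL) ltrN10.
Qed.

Lemma pivot_leaving_cap : x' e' != 0 -> x' e' = (cap G e')%:R.
Proof.
move=> x'0; case: (ltrgtP (th e') 0) => [th0|th0|th0].
- by move: x'0; rewrite /x' (leaving_at_bound hleave th0) eqxx.
- exact: leaving_at_cap hleave th0.
- by move: (leaving_theta_neq0 hleave); rewrite th0 eqxx.
Qed.

Let L' := if x' e' == 0 then e' |: (L :\ e) else L :\ e.
Let U' := if x' e' == 0 then U :\ e else e' |: (U :\ e).

Lemma pivot_feasible_nonbasic (T' : {set E}) eb' : e' \notin L -> e' \notin U ->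
  (forall g, (g \in T') + (g == eb') + (g == e') = (g \in T) + (g == eb) + (g == e))%N ->
  spanning_tree G T' -> bcyc R G T' eb' != 0 -> feasible_bs R G L' T' U' eb'.
Proof.
move=> e'L e'U balT spT' hb'.
have e'e : e' != e by apply: contraTneq eLU => <-; rewrite (negbTE e'L).
apply: pivot_feasible_of_basic.
  apply/is_bsP; split=> //; apply: partitions_pivot part _ balT => g.
  rewrite /L' /U'; case: ifP => _; rewrite !inE; (have [->|ge] := eqVneq g e;
    [ by rewrite (eq_sym e e') (negbTE e'e) /=; move: eLU; case: (partitionsP e part)
    | by have [->|] := eqVneq g e'; rewrite ?(negbTE e'L) ?(negbTE e'U) /= ?addn0 ]).
apply: pivot_is_basic; rewrite /L' /U'; case: eqP => x'0;
  rewrite ?subsetUr ?subxx ?inE ?eqxx ?(negbTE e'L) ?(negbTE e'U) ?andbF //= => _.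
exact/pivot_leaving_cap/eqP.
Qed.

Lemma pivot_feasible_bar : e' = eb -> feasible_bs_t R G (pivot G L T U eb e e' x').
Proof.
move=> e'eb.
have be0 : be != 0.
  move: theta_leaving; rewrite e'eb chi_self // mulr1 chi_out ?mul0r 1?eq_sym //.
  by rewrite !inE negb_or eq_sym e_neq_eb ebT.
have : feasible_bs R G L' T U' e.
  apply: pivot_feasible_nonbasic; rewrite ?e'eb //; last by move=> g; rewrite addnAC.
    by case: (partitionsP eb part) (eqxx eb).
  by case: (partitionsP eb part) (eqxx eb).
by rewrite /pivot /L' /U' e'eb (eq_sym eb e) (negbTE e_neq_eb) eqxx; case: ifP.
Qed.

Local Notation T1 := ((e |: T) :\ e').
Local Notation T2 := ((eb |: T) :\ e').

(* Writing C'(eb) as a combination of C(e) and C(eb) turns b(C'(eb)) = 0 into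
   theta_e' = 0. *)
Lemma pivot_bcyc_exchange : e' \in T -> spanning_tree G T1 -> bcyc R G T1 eb != 0.
Proof.
move=> e'T hT1.
have at_e' := chi_exchange_removed hT eT ebT e_neq_eb e'T hT1.
rewrite (bcyc_exchange hT eT ebT e_neq_eb hT1); set al := chi R G T1 eb e in at_e' *.
apply: contra theta_leaving => /eqP bb0; apply/eqP.
have -> : chi R G T eb e' = - (al * chi R G T e e') by apply/eqP; rewrite -addr_eq0 addrC at_e'.
have -> : bb = - (al * be) by apply/eqP; rewrite -addr_eq0 addrC bb0.
ring.
Qed.

(* If e' is not on C(e), it lies on C(eb), and C(e) survives exchanging e' for eb. *)
Lemma pivot_bar_exchange : e' \in T -> ~~ spanning_tree G T1 ->
  spanning_tree G T2 /\ bcyc R G T2 e != 0.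
Proof.
move=> e'T hT1; have ebe : eb != e by rewrite eq_sym e_neq_eb.
have chi_e : chi R G T e e' = 0 by apply: contraNeq hT1; apply: spanning_tree_exchange.
have := theta_leaving; rewrite chi_e mul0r eq_sym mulf_eq0 negb_or => /andP[be0 chi_eb].
have hT2 := spanning_tree_exchange hT ebT e'T chi_eb; split=> //.
have := chi_exchange_removed hT ebT eT ebe e'T hT2; rewrite chi_e addr0 => /eqP.
rewrite mulf_eq0 (negbTE chi_eb) orbF => /eqP al0.
by rewrite (bcyc_exchange hT ebT eT ebe hT2) al0 mul0r add0r.
Qed.

Lemma pivot_feasible_tree : e' \in T -> feasible_bs_t R G (pivot G L T U eb e e' x').
Proof.
move=> e'T; have e'e : e' != e by apply: contraTneq e'T => ->.
have e'eb : e' != eb by apply: contraTneq e'T => ->.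
have [e'L e'U] : e' \notin L /\ e' \notin U by move: e'T; case: (partitionsP e' part).
rewrite /pivot (negbTE e'e) (negbTE e'eb) /=; case: ifP => hT1.
  apply: pivot_feasible_nonbasic => //; last exact: pivot_bcyc_exchange.
  by move=> g; rewrite exchange_count.
have [hT2 hb2] := pivot_bar_exchange e'T (negbT hT1).
apply: pivot_feasible_nonbasic => // g.
by rewrite exchange_count // addnAC.
Qed.

End Pivot.

End Graph.

Theorem lemma1 (R : realFieldType) (V E : finType) (G : mcf V E)
    (L T U : {set E}) (eb : E) (vr : V) (pi mu : V -> R)
    (e e' : E) (d : R) :
  feasible_bs R G L T U eb ->
  is_potential G (costR R G) T vr pi ->
  is_potential G (feeR R G) T vr mu ->
  (e \in L /\ dval G eb pi mu e < 0) \/ (e \in U /\ dval G eb pi mu e > 0) ->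
  let x := basic_sol R G L U in
  let th := theta G L T eb mu e in
  is_leaving G x th e' d ->
  let x' := fun g => x g + d * th g in
  feasible_bs_t R G (pivot G L T U eb e e' x').
Proof.
move=> [hbs hx] _ [_ hmu] hent x th hleave x'.
have eLU : (e \in L) || (e \in U) by case: hent => -[-> _]; rewrite ?orbT.
case: (leaving_edge_cases hbs hmu eLU hleave).
- exact: pivot_feasible_self hbs hx hmu eLU hleave.
- exact: pivot_feasible_bar hbs hx hmu eLU hleave.
- exact: pivot_feasible_tree hbs hx hmu eLU hleave.
Qed.
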